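(* For every set $V \subset \mathcal{A}_0$ we have $$V^* = \overline{(\mathrm{cm}(V))^T},$$ where the closure is taken in the space $\mathcal{A}$ (topology of locally uniform convergence in $D$).
   Context: $D=\{z:|z|<1\}$, $\overline D$ its closure. $\mathcal{A}$ is the space of functions $f(z)=\sum_{k\ge0}a_k(f)z^k$ analytic in $D$, with the topology of locally uniform convergence; $\mathcal{A}_0=\{f\in\mathcal{A}: a_0(f)=1\}$. $\mathcal{A}(\overline D)$ is the set of functions analytic in some disk $\{|z|<R\}$ with $R>1$, and $\mathcal{A}_0(\overline D)=\{g\in\mathcal{A}(\overline D):a_0(g)=1\}$. The Hadamard product is $(f*g)(z)=\sum_{k\ge0}a_k(f)a_k(g)z^k$. For $V\subset\mathcal{A}_0$, the dual is $V^*=\{g\in\mathcal{A}_0:(f*g)(z)\ne0 \text{ for all } z\in D,\ f\in V\}$. For $x\in\overline D$, $(P_xf)(z)=f(xz)$, and the complete hull is $\mathrm{cm}(V)=\{P_xf: f\in V,\ x\in\overline D\}$. For $V\subset\mathcal{A}_0$, $V^T=\{g\in\mathcal{A}_0(\overline D): (f*g)(1)\ne0 \text{ for all } f\in V\}$. *)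

From Stdlib Require Import Reals.
From Coquelicot Require Import Coquelicot.
Open Scope R_scope.

(* A function analytic in D is represented by its Taylor coefficient sequence
   a : nat -> C ;  f(z) = sum_k a_k z^k. *)
Definition coeffs := nat -> C.

Definition sums_to (a : coeffs) (z w : C) : Prop :=
  is_series (fun k => Cmult (a k) (Cpow z k)) w.

Definition in_A (a : coeffs) : Prop :=
  forall z : C, Cmod z < 1 -> ex_series (fun k => Cmult (a k) (Cpow z k)).

Definition in_A0 (a : coeffs) : Prop := in_A a /\ a 0%nat = RtoC 1.

Definition in_Abar (a : coeffs) : Prop :=
  exists R : R, 1 < R /\
    forall z : C, Cmod z < R -> ex_series (fun k => Cmult (a k) (Cpow z k)).

Definition in_A0bar (a : coeffs) : Prop := in_Abar a /\ a 0%nat = RtoC 1.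

Definition hadamard (a b : coeffs) : coeffs := fun k => Cmult (a k) (b k).

Definition dual (V : coeffs -> Prop) (g : coeffs) : Prop :=
  in_A0 g /\
  forall f, V f -> forall z : C, Cmod z < 1 ->
    forall w, sums_to (hadamard f g) z w -> w <> RtoC 0.

(* (P_x f)(z) = f(xz) *)
Definition Pmap (x : C) (a : coeffs) : coeffs := fun k => Cmult (a k) (Cpow x k).

Definition cm (V : coeffs -> Prop) (g : coeffs) : Prop :=
  exists f x, V f /\ Cmod x <= 1 /\ g = Pmap x f.

Definition Tset (V : coeffs -> Prop) (g : coeffs) : Prop :=
  in_A0bar g /\
  forall f, V f -> forall w, sums_to (hadamard f g) (RtoC 1) w -> w <> RtoC 0.

(* Closure in A for the topology of locally uniform convergence in D:
   g in A is in the closure of S iff every basic neighbourhood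
   {h : sup_{|z|<=r} |h(z) - g(z)| < eps} (0 <= r < 1, eps > 0) meets S.
   (Every compact subset of D lies in some closed disk |z| <= r, r < 1.) *)
Definition closure_A (S : coeffs -> Prop) (g : coeffs) : Prop :=
  in_A g /\
  forall r eps : R, 0 <= r < 1 -> 0 < eps ->
    exists h, S h /\ in_A h /\
      forall z : C, Cmod z <= r ->
        forall u v, sums_to h z u -> sums_to g z v -> Cmod (Cminus u v) < eps.

From Stdlib Require Import Reals Lra Lia Psatz ClassicalEpsilon Classical.
From Coquelicot Require Import Coquelicot.
From mathcomp Require ssreflect ssrfun ssrbool order ssralg ssrnum interval.
From mathcomp Require classical_sets topology normedtype derive Rstruct Rstruct_topology.

(* If g is in V^*, its dilations g(s z), s < 1, are analytic beyond the closed disk and lie in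
   cm(V)^T, because (P_x f * g(s .))(1) = (f * g)(x s) with |x s| < 1; as s -> 1 they converge to g
   locally uniformly. Conversely, let g be a locally uniform limit of functions h in cm(V)^T and
   f in V. Each f * h is zero-free on the closed unit disk, since its value at z is
   (P_z f * h)(1), and by Cauchy's estimates f * h converges to f * g locally uniformly. As
   (f * g)(0) = 1, Hurwitz's theorem then forbids f * g to vanish in D. Hurwitz's theorem is
   proved directly for power series: expansion around a point, a zero of minimal modulus, the
   minimum modulus principle, and compactness of closed disks. *)

Open Scope R_scope.

(* [ring] on C, also for goals typed in Coquelicot's algebraic structures over C *)
Ltac Cring := match goal with |- ?a = ?b => change (@eq C a b); ring end.

Module Compactness.
Import ssreflect ssrfun ssrbool order ssralg ssrnum interval.
Import classical_sets topology normedtype derive Rstruct Rstruct_topology.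
Local Open Scope classical_set_scope.
Local Open Scope R_scope.

Lemma ball_RE (x y e : R) : ball x e y <-> Rabs (y - x) < e.
Proof.
rewrite /ball /= -(Rabs_minus_sym x y).
have -> : Num.norm (GRing.add x (GRing.opp y)) = Rabs (x - y) by [].
by split => [/RltP|h]; last apply/RltP.
Qed.

Lemma R2_closed_bounded_min (K : set (R * R)) (f : R * R -> R) (M : R) :
  K !=set0 ->
  (forall p, K p -> Rabs p.1 <= M /\ Rabs p.2 <= M) ->
  (forall p, (forall e, 0 < e ->
     exists q, K q /\ Rabs (q.1 - p.1) < e /\ Rabs (q.2 - p.2) < e) -> K p) ->
  (forall p, K p -> forall e, 0 < e -> exists d, 0 < d /\ forall q, K q ->
     Rabs (q.1 - p.1) < d -> Rabs (q.2 - p.2) < d -> Rabs (f q - f p) < e) ->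
  exists c, K c /\ forall t, K t -> f c <= f t.
Proof.
move=> K0 Kbd Kcl fcont.
have clK : closed K.
  move=> p clp; apply: Kcl => e e0.
  have e0' : is_true (Order.lt 0 e) by apply/RltP.
  have [q [Kq [/ball_RE b1 /ball_RE b2]]] := clp _ (nbhsx_ballx p e e0').
  by exists q.
have cK : compact K.
  have -> : K = (`[-M, M] `*` `[-M, M]) `&` K.
    rewrite eqEsubset; split => [p Kp|p [] //]; split => //.
    have [/Rabs_le_between h1 /Rabs_le_between h2] := Kbd p Kp.
    by split; rewrite /= in_itv /=; apply/andP; split; apply/RleP; rewrite -?RoppE; lra.
  apply: compact_closedI => //.
  exact: compact_setX (@segment_compact _ (-M) M) (@segment_compact _ (-M) M).
have cf : {within K, continuous f}.
  apply/subspace_continuousP => x Kx B /nbhs_ballP [e /RltP e0 eB].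
  have [d [d0 hd]] := fcont x Kx e e0.
  apply/nbhs_ballP; exists d; first exact/RltP.
  move=> z [/ball_RE b1 /ball_RE b2] Kz.
  by apply: eB; apply/ball_RE; apply: hd.
have [c Kc minf] := compact_EVT_min K0 cK cf.
exists c; split; first by move: Kc; rewrite inE.
by move=> t Kt; apply/RleP; apply: minf; rewrite inE.
Qed.

End Compactness.

Lemma Cmod_le_Rabs_re_im (c : C) : Cmod c <= Rabs (fst c) + Rabs (snd c).
Proof.
  unfold Cmod. rewrite <- (sqrt_Rsqr (Rabs (fst c) + Rabs (snd c)))
    by (generalize (Rabs_pos (fst c)) (Rabs_pos (snd c)); lra).
  apply sqrt_le_1_alt. unfold Rsqr.
  generalize (Rabs_pos (fst c)) (Rabs_pos (snd c)).
  rewrite <- (pow2_abs (fst c)), <- (pow2_abs (snd c)). nra.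
Qed.

Lemma C_closed_bounded_min (K : C -> Prop) (f : C -> R) (M : R) :
  (exists p, K p) ->
  (forall p, K p -> Cmod p <= M) ->
  (forall p, (forall e, 0 < e -> exists q, K q /\ Cmod (q - p)%C < e) -> K p) ->
  (forall p, K p -> forall e, 0 < e -> exists d, 0 < d /\
      forall q, K q -> Cmod (q - p)%C < d -> Rabs (f q - f p) < e) ->
  exists c, K c /\ forall t, K t -> f c <= f t.
Proof.
  intros Kne Kbd Kcl fcont.
  assert (Cmod_re_im : forall p : C, Rabs (fst p) <= Cmod p /\ Rabs (snd p) <= Cmod p).
  { intros p. generalize (Rmax_Cmod p). unfold Rmax.
    destruct (Rle_dec (Rabs (fst p)) (Rabs (snd p))); lra. }
  apply (Compactness.R2_closed_bounded_min K f M Kne).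
  - intros p Kp. destruct (Cmod_re_im p). specialize (Kbd p Kp). lra.
  - intros p H. apply Kcl. intros e He.
    destruct (H (e / 2) ltac:(lra)) as [q [Kq [H1 H2]]].
    exists q. split; auto. eapply Rle_lt_trans. apply Cmod_le_Rabs_re_im. simpl. unfold Rminus in *. lra.
  - intros p Kp e He. destruct (fcont p Kp e He) as [d [Hd Hq]].
    exists (d / 2). split. lra. intros q Kq H1 H2. apply Hq; auto.
    eapply Rle_lt_trans. apply Cmod_le_Rabs_re_im. simpl. unfold Rminus in *. lra.
Qed.

Lemma is_series_C_unique (u : nat -> C) l1 l2 :
  is_series u l1 -> is_series u l2 -> l1 = l2.
Proof. intros H1 H2. exact (filterlim_locally_unique _ _ _ H1 H2). Qed.

Definition CSeries (u : nat -> C) : C :=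
  epsilon (inhabits (RtoC 0)) (fun l => is_series u l).

Lemma CSeries_correct u : ex_series u -> is_series u (CSeries u).
Proof. intros [l H]. unfold CSeries. apply epsilon_spec. exists l. exact H. Qed.

Lemma norm_C (x : C) : @norm C_AbsRing C_NormedModule x = Cmod x.
Proof. reflexivity. Qed.

Lemma is_series_Cmod_le (u : nat -> C) l (b : nat -> R) :
  is_series u l -> (forall n, Cmod (u n) <= b n) -> ex_series b ->
  Cmod l <= Series b.
Proof.
  intros Hu Hb Heb.
  assert (Hlim : is_lim_seq (fun n => Cmod (sum_n u n)) (Cmod l)).
  { unfold is_lim_seq. eapply filterlim_ext. intros n. apply norm_C.
    rewrite <- norm_C. eapply filterlim_comp. exact Hu. apply filterlim_norm. }
  assert (Hle : forall n, Cmod (sum_n u n) <= sum_n b n).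
  { intros n. eapply Rle_trans. apply (@norm_sum_n_m C_AbsRing C_NormedModule).
    apply sum_n_m_le. exact Hb. }
  assert (Hb_lim : is_lim_seq (sum_n b) (Series b)) by exact (Series_correct _ Heb).
  exact (is_lim_seq_le _ _ _ _ Hle Hlim Hb_lim).
Qed.

Lemma ex_series_Cmod_le (u : nat -> C) (b : nat -> R) :
  (forall n, Cmod (u n) <= b n) -> ex_series b -> ex_series u.
Proof. intros Hb. apply (ex_series_le u b). exact Hb. Qed.

Lemma sum_Sn_C (a : nat -> C) n : sum_n a (S n) = (sum_n a n + a (S n))%C.
Proof. exact (@sum_Sn C_AbelianMonoid a n). Qed.

Lemma ex_series_C_bounded (u : nat -> C) :
  ex_series u -> exists M, forall n, Cmod (u n) <= M.
Proof.
  intros [l Hl].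
  destruct (filterlim_bounded (sum_n u)) as [M HM].
  { exists l. exact Hl. }
  exists (2 * M). intros n.
  assert (HM0 : Cmod (sum_n u 0) <= M) by apply HM.
  assert (0 <= Cmod (u 0%nat)) by apply Cmod_ge_0.
  destruct n.
  - rewrite sum_O in HM0. lra.
  - assert (E : u (S n) = (sum_n u (S n) - sum_n u n)%C).
    { rewrite sum_Sn_C. Cring. }
    assert (h1 : Cmod (sum_n u (S n)) <= M) by apply HM.
    assert (h2 : Cmod (sum_n u n) <= M) by apply HM.
    rewrite E. unfold Cminus. eapply Rle_trans. apply Cmod_triangle.
    rewrite Cmod_opp. lra.
Qed.

Lemma is_series_C_single (k : nat) (a : C) :
  is_series (fun m => if Nat.eqb m k then a else RtoC 0) a.
Proof.
  set (s := fun m => if Nat.eqb m k then a else RtoC 0).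
  assert (H : forall n, sum_n s n = if Nat.ltb n k then RtoC 0 else a).
  { induction n.
    - rewrite sum_O. unfold s. destruct k; reflexivity.
    - rewrite sum_Sn_C, IHn. unfold s.
      destruct (Nat.ltb n k) eqn:E1; destruct (Nat.eqb (S n) k) eqn:E2;
        destruct (Nat.ltb (S n) k) eqn:E3;
        rewrite ?Nat.ltb_lt, ?Nat.ltb_ge, ?Nat.eqb_eq, ?Nat.eqb_neq in *;
        try lia; Cring. }
  apply filterlim_ext_loc with (f := fun _ => a).
  - exists k. intros n Hn. rewrite H. destruct (Nat.ltb n k) eqn:E; [|reflexivity].
    rewrite Nat.ltb_lt in E. lia.
  - apply filterlim_const.
Qed.

Lemma is_series_C_zero : is_series (fun _ : nat => RtoC 0) (RtoC 0).
Proof.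
  eapply is_series_ext; [|apply (is_series_C_single 0 (RtoC 0))].
  intros n. simpl. destruct (Nat.eqb n 0); reflexivity.
Qed.

Lemma is_series_Cmult_l (a : C) (u : nat -> C) l :
  is_series u l -> is_series (fun m => a * u m)%C (a * l)%C.
Proof. exact (@is_series_scal_l C_AbsRing C_NormedModule a u l). Qed.

Lemma is_series_Cmult_r (a : C) (u : nat -> C) l :
  is_series u l -> is_series (fun m => u m * a)%C (l * a)%C.
Proof.
  intros H. rewrite Cmult_comm. eapply is_series_ext; [|exact (is_series_Cmult_l a u l H)].
  intros n. apply Cmult_comm.
Qed.

Lemma ex_series_Rmult_l (c : R) (a : nat -> R) :
  ex_series a -> ex_series (fun n => c * a n).
Proof. exact (ex_series_scal_l c a). Qed.

Lemma ex_series_Rle (a b : nat -> R) :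
  (forall k, 0 <= a k <= b k) -> ex_series b -> ex_series a.
Proof.
  intros H. apply (ex_series_le a b). intros n.
  change (Rabs (a n) <= b n). rewrite Rabs_pos_eq; apply H.
Qed.

Lemma Series_nonneg (b : nat -> R) : (forall n, 0 <= b n) -> ex_series b -> 0 <= Series b.
Proof.
  intros H Hb. replace 0 with (0 * Series b) by ring. rewrite <- Series_scal_l.
  apply Series_le; [|exact Hb]. intros n. specialize (H n). lra.
Qed.

Lemma Series_tail_small (b : nat -> R) : ex_series b -> forall e, 0 < e ->
  exists N0, forall n, (N0 <= n)%nat -> Series (fun m => b (n + m)%nat) <= e.
Proof.
  intros Hb e He.
  assert (Hs : is_lim_seq (sum_n b) (Series b)) by exact (Series_correct _ Hb).
  apply is_lim_seq_spec in Hs. destruct (Hs (mkposreal e He)) as [N1 HN1].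
  exists (S N1). intros n Hn.
  rewrite (Series_incr_n b n) in HN1 by (lia || exact Hb).
  assert (H := HN1 (pred n) ltac:(lia)). simpl in H.
  rewrite sum_n_Reals in H. apply Rabs_lt_between in H. lra.
Qed.

Lemma pow_Rdiv (x y : R) n : y <> 0 -> (x / y) ^ n = x ^ n / y ^ n.
Proof.
  intros Hy. induction n; simpl. field. rewrite IHn. field.
  split; [apply pow_nonzero|]; auto.
Qed.

Lemma pow_le_1 (x : R) n : 0 <= x <= 1 -> 0 <= x ^ n <= 1.
Proof. intros Hx. split; [apply pow_le; lra|rewrite <- (pow1 n); apply pow_incr; lra]. Qed.

Lemma Cmod_Cmult_pow (c z : C) k : Cmod (c * z ^ k)%C = Cmod c * Cmod z ^ k.
Proof. rewrite Cmod_mult, Cmod_pow. reflexivity. Qed.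

Lemma Cmod_RtoC (r : R) : 0 <= r -> Cmod (RtoC r) = r.
Proof. intros. rewrite Cmod_R. apply Rabs_pos_eq. auto. Qed.

Lemma Cmod_sub_sym (a b : C) : Cmod (a - b)%C = Cmod (b - a)%C.
Proof. replace (a - b)%C with (- (b - a))%C by Cring. apply Cmod_opp. Qed.

Lemma Cmod_triangle_rev (a b : C) : Cmod a - Cmod b <= Cmod (a - b)%C.
Proof.
  replace a with ((a - b) + b)%C at 1 by Cring.
  generalize (Cmod_triangle (a - b)%C b). lra.
Qed.

Lemma Rabs_Cmod_sub (a b : C) : Rabs (Cmod a - Cmod b) <= Cmod (a - b)%C.
Proof.
  apply Rabs_le. split.
  - generalize (Cmod_triangle_rev b a). rewrite (Cmod_sub_sym b a). lra.
  - apply Cmod_triangle_rev.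
Qed.

Lemma Cmod_RtoC_mult_unit (t : R) (z : C) : 0 <= t -> Cmod z = 1 -> Cmod (RtoC t * z)%C = t.
Proof. intros Ht Hz. rewrite Cmod_mult, Hz, Cmod_RtoC by auto. ring. Qed.

Lemma Cminus_eq_0 (a b : C) : (a - b)%C = RtoC 0 -> a = b.
Proof. intros H. replace a with ((a - b) + b)%C by Cring. rewrite H. Cring. Qed.

Lemma Cmod_le_eps_eq (a b : C) : (forall e, 0 < e -> Cmod (a - b)%C <= e) -> a = b.
Proof.
  intros H. apply Cminus_eq_0, Cmod_eq_0, Rle_antisym; [|apply Cmod_ge_0].
  apply le_epsilon. intros e He. rewrite Rplus_0_l. auto.
Qed.

Lemma exists_least_nat (P : nat -> Prop) :
  (exists n, P n) -> exists n, P n /\ forall j, (j < n)%nat -> ~ P j.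
Proof.
  intros [n Hn]. revert Hn. induction n using (well_founded_induction Nat.lt_wf_0). intros Hn.
  destruct (classic (exists j, (j < n)%nat /\ P j)) as [[j [Hj1 Hj2]]|Hno].
  - apply (H j Hj1 Hj2).
  - exists n. split; auto. intros j Hj Pj. apply Hno. exists j. auto.
Qed.

Definition abs_summable (c : coeffs) (r : R) : Prop :=
  ex_series (fun k => Cmod (c k) * r ^ k).

Definition abs_sum (c : coeffs) (r : R) : R := Series (fun k => Cmod (c k) * r ^ k).

Definition psum (c : coeffs) (z : C) : C := CSeries (fun k => c k * z ^ k)%C.

Lemma abs_sum_nonneg c r : 0 <= r -> abs_summable c r -> 0 <= abs_sum c r.
Proof.
  intros Hr H. apply Series_nonneg; [|exact H].
  intros n. apply Rmult_le_pos; [apply Cmod_ge_0|apply pow_le; lra].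
Qed.

Lemma ex_series_geom_dominated (a : nat -> R) (s r M : R) :
  (forall k, 0 <= a k) -> (forall k, a k * s ^ k <= M) -> 0 <= r < s ->
  ex_series (fun k => a k * r ^ k).
Proof.
  intros Ha HM Hr.
  assert (Hq : 0 <= r / s < 1).
  { split; [apply Rdiv_le_0_compat; lra|apply (Rdiv_lt_1 r s); lra]. }
  apply (ex_series_Rle _ (fun k => M * (r / s) ^ k)).
  - intros k. split.
    + apply Rmult_le_pos; [apply Ha|apply pow_le; lra].
    + replace (a k * r ^ k) with ((a k * s ^ k) * (r / s) ^ k)
        by (rewrite pow_Rdiv by lra; field; apply pow_nonzero; lra).
      apply Rmult_le_compat_r; [apply pow_le; lra|apply HM].
  - apply ex_series_Rmult_l, ex_series_geom. rewrite Rabs_pos_eq; lra.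
Qed.

Lemma in_A_coef_bound (c : coeffs) (s : R) : in_A c -> 0 <= s < 1 ->
  exists M, forall k, Cmod (c k) * s ^ k <= M.
Proof.
  intros Hc Hs.
  destruct (ex_series_C_bounded _ (Hc (RtoC s) ltac:(rewrite Cmod_RtoC; lra))) as [M HM].
  exists M. intros k. specialize (HM k). rewrite Cmod_Cmult_pow, Cmod_RtoC in HM by lra. exact HM.
Qed.

Lemma in_A_abs_summable (c : coeffs) r : in_A c -> 0 <= r < 1 -> abs_summable c r.
Proof.
  intros Hc Hr. destruct (in_A_coef_bound c ((r + 1) / 2) Hc ltac:(lra)) as [M HM].
  apply (ex_series_geom_dominated _ ((r + 1) / 2) r M); [intros; apply Cmod_ge_0|exact HM|lra].
Qed.

Lemma INR_mult_pow_le (t : R) k : 0 <= t < 1 -> INR k * t ^ k <= / (1 - t).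
Proof.
  intros Ht.
  set (geom := fix geom k := match k with O => 0 | S k' => geom k' + t ^ k' end).
  assert (H1 : forall k, INR k * t ^ k <= geom k).
  { induction k0; [simpl; lra|]. rewrite S_INR. simpl.
    assert (t ^ k0 * t <= t ^ k0 * 1) by (apply Rmult_le_compat_l; [apply pow_le|]; lra).
    assert (0 <= INR k0) by apply pos_INR.
    assert (INR k0 * (t * t ^ k0) <= INR k0 * t ^ k0) by (apply Rmult_le_compat_l; nra).
    nra. }
  assert (H2 : forall k, (1 - t) * geom k = 1 - t ^ k).
  { induction k0; simpl; [ring|]. rewrite Rmult_plus_distr_l, IHk0. ring. }
  specialize (H1 k). specialize (H2 k).
  assert (0 <= t ^ k) by (apply pow_le; lra).
  apply Rle_trans with (1 := H1).
  apply (Rmult_le_reg_l (1 - t)); [lra|]. rewrite H2, Rinv_r by lra. lra.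
Qed.

Lemma in_A_deriv_abs_summable (c : coeffs) r : in_A c -> 0 <= r < 1 ->
  ex_series (fun k => INR k * Cmod (c k) * r ^ k).
Proof.
  intros Hc Hr. set (rho := (r + 1) / 2). set (rho1 := (r + rho) / 2).
  assert (Hq : 0 <= rho1 / rho < 1).
  { split; [apply Rdiv_le_0_compat|apply (Rdiv_lt_1 rho1 rho)]; unfold rho1, rho; lra. }
  destruct (in_A_coef_bound c rho Hc ltac:(unfold rho; lra)) as [M HM].
  apply (ex_series_geom_dominated _ rho1 r (M * / (1 - rho1 / rho))).
  - intros k. apply Rmult_le_pos; [apply pos_INR|apply Cmod_ge_0].
  - intros k.
    replace (INR k * Cmod (c k) * rho1 ^ k)
      with ((Cmod (c k) * rho ^ k) * (INR k * (rho1 / rho) ^ k))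
      by (rewrite pow_Rdiv by (unfold rho; lra); field; apply pow_nonzero; unfold rho; lra).
    apply Rmult_le_compat.
    + apply Rmult_le_pos; [apply Cmod_ge_0|apply pow_le; unfold rho; lra].
    + apply Rmult_le_pos; [apply pos_INR|apply pow_le; lra].
    + apply HM.
    + apply INR_mult_pow_le; exact Hq.
  - unfold rho1, rho; lra.
Qed.

Lemma abs_summable_ex_series (c : coeffs) r z : abs_summable c r -> Cmod z <= r ->
  ex_series (fun k => c k * z ^ k)%C.
Proof.
  intros H Hz. apply (ex_series_Cmod_le _ _) with (2 := H). intros k.
  rewrite Cmod_Cmult_pow. apply Rmult_le_compat_l; [apply Cmod_ge_0|].
  apply pow_incr. split; [apply Cmod_ge_0|exact Hz].
Qed.

Lemma psum_sums (c : coeffs) r z : abs_summable c r -> Cmod z <= r -> sums_to c z (psum c z).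
Proof. intros H Hz. apply CSeries_correct. eapply abs_summable_ex_series; eauto. Qed.

Lemma sums_to_unique c z l1 l2 : sums_to c z l1 -> sums_to c z l2 -> l1 = l2.
Proof. apply is_series_C_unique. Qed.

Lemma sums_to_0 (c : coeffs) : sums_to c (RtoC 0) (c O).
Proof.
  eapply is_series_ext; [|apply (is_series_C_single O (c O))].
  intros k. destruct k; simpl; Cring.
Qed.

Lemma psum_0 (c : coeffs) : psum c (RtoC 0) = c O.
Proof.
  apply (sums_to_unique c (RtoC 0)); [apply CSeries_correct|apply sums_to_0].
  exists (c O). apply sums_to_0.
Qed.

Lemma abs_summable_hadamard (f g : coeffs) r : in_A f -> in_A g -> 0 <= r < 1 ->
  abs_summable (hadamard f g) r.
Proof.
  intros Hf Hg Hr. set (R1 := (1 + r) / 2).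
  destruct (in_A_coef_bound f R1 Hf ltac:(unfold R1; lra)) as [M1 HM1].
  destruct (in_A_coef_bound g R1 Hg ltac:(unfold R1; lra)) as [M2 HM2].
  apply (ex_series_geom_dominated _ (R1 * R1) r (M1 * M2)).
  - intros; apply Cmod_ge_0.
  - intros k. unfold hadamard. rewrite Cmod_mult, Rpow_mult_distr.
    replace (Cmod (f k) * Cmod (g k) * (R1 ^ k * R1 ^ k))
      with ((Cmod (f k) * R1 ^ k) * (Cmod (g k) * R1 ^ k)) by ring.
    apply Rmult_le_compat; try apply HM1; try apply HM2;
      apply Rmult_le_pos; try apply Cmod_ge_0; apply pow_le; unfold R1; lra.
  - unfold R1. nra.
Qed.

Lemma abs_summable_minus (a b : coeffs) r : 0 <= r -> abs_summable a r -> abs_summable b r ->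
  abs_summable (fun k => a k - b k)%C r.
Proof.
  intros Hr Ha Hb.
  apply (ex_series_Rle _ (fun k => Cmod (a k) * r ^ k + Cmod (b k) * r ^ k)).
  - intros k. assert (0 <= r ^ k) by (apply pow_le; auto).
    assert (Cmod (a k - b k)%C <= Cmod (a k) + Cmod (b k)).
    { unfold Cminus. eapply Rle_trans. apply Cmod_triangle. rewrite Cmod_opp. lra. }
    assert (0 <= Cmod (a k - b k)%C) by apply Cmod_ge_0.
    split; [apply Rmult_le_pos; auto|nra].
  - exact (ex_series_plus _ _ Ha Hb).
Qed.

(** * Dilations approximate an element of the dual *)

Lemma sums_to_Pmap (x : C) (f : coeffs) z w : sums_to (Pmap x f) z w <-> sums_to f (x * z)%C w.
Proof.
  unfold sums_to, Pmap. split; apply is_series_ext; intros k; rewrite Cpow_mult_l; Cring.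
Qed.

Lemma hadamard_Pmap (x y : C) (f g : coeffs) k :
  hadamard (Pmap x f) (Pmap y g) k = Pmap (x * y)%C (hadamard f g) k.
Proof. unfold hadamard, Pmap. rewrite Cpow_mult_l. Cring. Qed.

Lemma in_A0bar_dilate (g : coeffs) (s : R) : in_A0 g -> 0 < s < 1 ->
  in_A0bar (Pmap (RtoC s) g).
Proof.
  intros [HgA Hg0] Hs. split.
  - exists (/ s). split.
    + rewrite <- Rinv_1. apply Rinv_lt_contravar; lra.
    + intros z Hz.
      assert (Hsz : Cmod (RtoC s * z)%C < 1).
      { rewrite Cmod_mult, Cmod_RtoC by lra.
        apply (Rmult_lt_reg_l (/ s)); [apply Rinv_0_lt_compat; lra|].
        rewrite <- Rmult_assoc, Rinv_l, Rmult_1_l, Rmult_1_r by lra. exact Hz. }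
      eapply ex_series_ext; [|apply (HgA _ Hsz)].
      intros k. unfold Pmap. rewrite Cpow_mult_l. Cring.
  - unfold Pmap. rewrite Hg0. Cring.
Qed.

Lemma Tset_cm_dilate (V : coeffs -> Prop) (g : coeffs) (s : R) : dual V g -> 0 < s < 1 ->
  Tset (cm V) (Pmap (RtoC s) g).
Proof.
  intros [Hg HgV] Hs. split; [apply in_A0bar_dilate; auto|].
  intros f' [f [x [Vf [Hx ->]]]] w Hw.
  apply (HgV f Vf (x * RtoC s)%C).
  - rewrite Cmod_mult, Cmod_RtoC by lra.
    assert (0 <= Cmod x) by apply Cmod_ge_0. nra.
  - replace (x * RtoC s)%C with (x * RtoC s * RtoC 1)%C by Cring.
    apply sums_to_Pmap. eapply is_series_ext; [|exact Hw].
    intros k. cbv beta. rewrite hadamard_Pmap. reflexivity.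
Qed.

Lemma one_sub_pow_le (s : R) k : 0 <= s <= 1 -> 1 - s ^ k <= INR k * (1 - s).
Proof.
  intros Hs. induction k; [simpl; lra|]. rewrite S_INR. simpl.
  assert (H := pow_le_1 s k Hs). nra.
Qed.

Lemma dilate_close (g : coeffs) (r s : R) z u v : in_A g -> 0 <= r < 1 -> 0 <= s <= 1 ->
  Cmod z <= r -> sums_to (Pmap (RtoC s) g) z u -> sums_to g z v ->
  Cmod (u - v)%C <= Series (fun k => INR k * Cmod (g k) * r ^ k) * (1 - s).
Proof.
  intros HgA Hr Hs Hz Hu Hv. rewrite <- Series_scal_r.
  apply (is_series_Cmod_le _ _ _ (is_series_minus _ _ _ _ Hu Hv));
    [|apply ex_series_scal_r, in_A_deriv_abs_summable; auto].
  intros k. change (Cmod (Pmap s g k * z ^ k - g k * z ^ k)%C <= INR k * Cmod (g k) * r ^ k * (1 - s)).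
  unfold Pmap.
  replace (g k * s ^ k * z ^ k - g k * z ^ k)%C with (g k * z ^ k * RtoC (s ^ k - 1))%C
    by (rewrite RtoC_minus, RtoC_pow; Cring).
  rewrite Cmod_mult, Cmod_Cmult_pow, Cmod_R.
  assert (Hb := one_sub_pow_le s k Hs).
  assert (Hsk := pow_le_1 s k Hs).
  rewrite Rabs_left1 by lra.
  assert (Hzk : Cmod z ^ k <= r ^ k) by (apply pow_incr; split; [apply Cmod_ge_0|exact Hz]).
  assert (0 <= Cmod (g k)) by apply Cmod_ge_0.
  assert (0 <= Cmod z ^ k) by (apply pow_le; apply Cmod_ge_0).
  assert (Cmod (g k) * Cmod z ^ k <= Cmod (g k) * r ^ k) by (apply Rmult_le_compat_l; auto).
  apply Rle_trans with (Cmod (g k) * r ^ k * (INR k * (1 - s))); [|right; ring].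
  apply Rmult_le_compat; nra.
Qed.

Lemma dual_subset_closure (V : coeffs -> Prop) (g : coeffs) :
  dual V g -> closure_A (Tset (cm V)) g.
Proof.
  intros Hdual. pose proof Hdual as [[HgA _] _].
  split; [exact HgA|]. intros r eps Hr Heps.
  set (K := Series (fun k => INR k * Cmod (g k) * r ^ k)).
  assert (HK : 0 <= K).
  { apply Series_nonneg; [|apply in_A_deriv_abs_summable; auto].
    intros n. apply Rmult_le_pos; [apply Rmult_le_pos; [apply pos_INR|apply Cmod_ge_0]|].
    apply pow_le; lra. }
  set (d := Rmin (1/2) (eps / (2 * (K + 1)))).
  assert (Hd : 0 < d <= eps / (2 * (K + 1))).
  { split; [apply Rmin_glb_lt; [lra|apply Rdiv_lt_0_compat; lra]|apply Rmin_r]. }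
  assert (Hd2 : d <= 1/2) by apply Rmin_l.
  set (s := 1 - d).
  assert (Hs : 1/2 <= s < 1) by (unfold s; lra).
  exists (Pmap (RtoC s) g).
  assert (HT := Tset_cm_dilate V g s Hdual ltac:(lra)).
  split; [exact HT|split].
  - destruct HT as [[[R0 [HR0 HR0s]] _] _]. intros z Hz. apply HR0s. lra.
  - intros z Hz u v Hu Hv.
    eapply Rle_lt_trans; [apply (dilate_close g r s z u v); auto; lra|].
    fold K. replace (1 - s) with d by (unfold s; ring).
    apply Rle_lt_trans with (K * (eps / (2 * (K + 1)))); [apply Rmult_le_compat_l; lra|].
    apply (Rmult_lt_reg_r (2 * (K + 1))); [lra|]. field_simplify; nra.
Qed.

Fixpoint sum_lt (f : nat -> C) (n : nat) : C :=
  match n with O => RtoC 0 | S n' => (sum_lt f n' + f n')%C end.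

Lemma sum_lt_ext_lt (f g : nat -> C) N :
  (forall j, (j < N)%nat -> f j = g j) -> sum_lt f N = sum_lt g N.
Proof.
  intros H. induction N; [reflexivity|]. simpl. rewrite IHN, H; [reflexivity|lia|].
  intros j Hj. apply H. lia.
Qed.

Lemma sum_lt_ext (f g : nat -> C) N : (forall j, f j = g j) -> sum_lt f N = sum_lt g N.
Proof. intros H. apply sum_lt_ext_lt. auto. Qed.

Lemma sum_lt_zero N : sum_lt (fun _ => RtoC 0) N = RtoC 0.
Proof. induction N; [reflexivity|]. simpl. rewrite IHN. Cring. Qed.

Lemma sum_lt_Cmult_l (a : C) (f : nat -> C) N :
  sum_lt (fun j => a * f j)%C N = (a * sum_lt f N)%C.
Proof. induction N; simpl; [|rewrite IHN]; Cring. Qed.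

Lemma sum_lt_plus (f g : nat -> C) N :
  sum_lt (fun j => f j + g j)%C N = (sum_lt f N + sum_lt g N)%C.
Proof. induction N; simpl; [|rewrite IHN]; Cring. Qed.

Lemma sum_lt_succ_l (f : nat -> C) N : sum_lt f (S N) = (f O + sum_lt (fun j => f (S j)) N)%C.
Proof. induction N; [simpl; Cring|]. simpl in *. rewrite IHN. Cring. Qed.

Lemma sum_lt_Cmod_le (f : nat -> C) N M :
  (forall j, Cmod (f j) <= M) -> Cmod (sum_lt f N) <= INR N * M.
Proof.
  intros H. induction N; [simpl; rewrite Cmod_0; lra|].
  rewrite S_INR. simpl. eapply Rle_trans; [apply Cmod_triangle|]. specialize (H N). lra.
Qed.

Lemma sum_lt_geom (q : C) N : ((1 - q) * sum_lt (fun j => q ^ j) N)%C = (1 - q ^ N)%C.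
Proof.
  induction N; [simpl; Cring|].
  simpl sum_lt. rewrite Cmult_plus_distr_l, IHN. simpl. Cring.
Qed.

Lemma sum_lt_is_series (F : nat -> nat -> C) (L : nat -> C) N :
  (forall j, is_series (F j) (L j)) ->
  is_series (fun m => sum_lt (fun j => F j m) N) (sum_lt L N).
Proof.
  intros H. induction N; [apply is_series_C_zero|].
  exact (is_series_plus _ _ _ _ IHN (H N)).
Qed.

Lemma sum_lt_single (f : nat -> C) m :
  (forall j, (j < m)%nat -> f j = RtoC 0) -> sum_lt f (S m) = f m.
Proof.
  intros H. simpl. rewrite (sum_lt_ext_lt f (fun _ => RtoC 0)) by auto.
  rewrite sum_lt_zero. Cring.
Qed.

Lemma sum_lt_two (f : nat -> C) k : (1 <= k)%nat ->
  (forall j, (1 <= j < k)%nat -> f j = RtoC 0) -> sum_lt f (S k) = (f O + f k)%C.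
Proof.
  intros Hk H. destruct k as [|k]; [lia|].
  rewrite sum_lt_succ_l, sum_lt_single; [reflexivity|].
  intros j Hj. apply H. lia.
Qed.

Definition cis (t : R) : C := (cos t, sin t).

Lemma cis_pow t n : (cis t ^ n)%C = cis (INR n * t).
Proof.
  induction n; simpl Cpow.
  - unfold cis. rewrite Rmult_0_l, cos_0, sin_0. reflexivity.
  - rewrite IHn, S_INR, Rmult_plus_distr_r, Rmult_1_l, Rplus_comm.
    unfold cis, Cmult; simpl. rewrite cos_plus, sin_plus. f_equal; ring.
Qed.

Lemma Cmod_cis t : Cmod (cis t) = 1.
Proof.
  unfold Cmod, cis; cbn [fst snd].
  replace (cos t ^ 2 + sin t ^ 2) with 1 by (generalize (sin2_cos2 t); unfold Rsqr; intros; nra).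
  apply sqrt_1.
Qed.

Lemma cis_neq_1 x : 0 < x < 2 * PI -> cis x <> RtoC 1.
Proof.
  intros Hx He. unfold cis, RtoC in He. injection He as Hc Hs.
  destruct (Rlt_le_dec x PI) as [H1|H1].
  - assert (0 < sin x) by (apply sin_gt_0; lra). lra.
  - destruct (Rle_lt_or_eq_dec _ _ H1) as [H2|H2].
    + assert (sin x < 0) by (apply sin_lt_0; lra). lra.
    + subst x. rewrite cos_PI in Hc. lra.
Qed.

Lemma exists_unit_Re_neg (b : C) k : b <> RtoC 0 -> (0 < k)%nat ->
  exists zeta, Cmod zeta = 1 /\ fst (b * zeta ^ k)%C < 0.
Proof.
  intros Hb Hk. destruct b as [b1 b2].
  assert (Hk' : INR k <> 0) by (apply not_0_INR; lia).
  assert (Hrot : forall t, (cis (t / INR k) ^ k)%C = cis t).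
  { intros t. rewrite cis_pow. f_equal. field. exact Hk'. }
  destruct (Rtotal_order b1 0) as [H1|[H1|H1]].
  - exists (cis 0). split; [apply Cmod_cis|]. rewrite cis_pow, Rmult_0_r.
    unfold cis, Cmult; simpl. rewrite cos_0, sin_0. lra.
  - subst b1. assert (b2 <> 0) by (intros ->; apply Hb; reflexivity).
    destruct (Rtotal_order b2 0) as [H2|[H2|H2]]; [|lra|].
    + exists (cis (- (PI / 2) / INR k)). split; [apply Cmod_cis|]. rewrite Hrot.
      unfold cis, Cmult; simpl. rewrite cos_neg, sin_neg, cos_PI2, sin_PI2. lra.
    + exists (cis (PI / 2 / INR k)). split; [apply Cmod_cis|]. rewrite Hrot.
      unfold cis, Cmult; simpl. rewrite cos_PI2, sin_PI2. lra.
  - exists (cis (PI / INR k)). split; [apply Cmod_cis|]. rewrite Hrot.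
    unfold cis, Cmult; simpl. rewrite cos_PI, sin_PI. lra.
Qed.

Definition omega (N : nat) : C := cis (2 * PI / INR N).

Lemma omega_pow N e : (omega N ^ e)%C = cis (2 * PI * INR e / INR N).
Proof. unfold omega. rewrite cis_pow. f_equal. unfold Rdiv. ring. Qed.

Lemma Cmod_omega_pow N e : Cmod (omega N ^ e)%C = 1.
Proof. rewrite omega_pow. apply Cmod_cis. Qed.

Lemma omega_pow_N N : (0 < N)%nat -> (omega N ^ N)%C = RtoC 1.
Proof.
  intros HN. rewrite omega_pow.
  replace (2 * PI * INR N / INR N) with (2 * PI) by (field; apply not_0_INR; lia).
  unfold cis. rewrite cos_2PI, sin_2PI. reflexivity.
Qed.

Lemma omega_pow_neq_1 N e : (0 < e < N)%nat -> (omega N ^ e)%C <> RtoC 1.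
Proof.
  intros He. rewrite omega_pow. apply cis_neq_1.
  assert (0 < INR e) by (apply lt_0_INR; lia).
  assert (INR e < INR N) by (apply lt_INR; lia).
  generalize PI_RGT_0. intros. split.
  - apply Rdiv_lt_0_compat; nra.
  - apply (Rmult_lt_reg_r (INR N)); [lra|].
    unfold Rdiv. rewrite Rmult_assoc, Rinv_l by lra. nra.
Qed.

Lemma root_unity_sum_N N : (0 < N)%nat ->
  sum_lt (fun j => (omega N ^ N) ^ j)%C N = RtoC (INR N).
Proof.
  intros HN. rewrite omega_pow_N by auto.
  rewrite (sum_lt_ext _ (fun _ => RtoC 1)) by (intros; apply Cpow_1_l).
  clear HN. induction N; [reflexivity|]. simpl sum_lt. rewrite IHN, S_INR, RtoC_plus. reflexivity.
Qed.

Lemma root_unity_sum_0 N d : (0 < d < N)%nat ->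
  sum_lt (fun j => (omega N ^ d) ^ j)%C N = RtoC 0.
Proof.
  intros Hd. set (q := (omega N ^ d)%C).
  assert (Hq : (q ^ N)%C = RtoC 1).
  { unfold q. rewrite <- Cpow_mult_r, Nat.mul_comm, Cpow_mult_r, omega_pow_N by lia.
    apply Cpow_1_l. }
  assert (Hq1 : (1 - q)%C <> RtoC 0).
  { intros H. apply (omega_pow_neq_1 N d Hd). fold q.
    replace q with (1 - (1 - q))%C by Cring. rewrite H. Cring. }
  assert (H := sum_lt_geom q N). rewrite Hq in H.
  transitivity (/ (1 - q) * ((1 - q) * sum_lt (fun j => q ^ j) N))%C; [field; exact Hq1|].
  rewrite H. Cring.
Qed.

Lemma root_unity_filter N k m : (k < N)%nat -> (m < k + N)%nat ->
  sum_lt (fun j => (omega N ^ (m + N - k)) ^ j)%C N =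
  if Nat.eqb m k then RtoC (INR N) else RtoC 0.
Proof.
  intros Hk Hm. destruct (Nat.eqb_spec m k) as [->|Hmk].
  - replace (k + N - k)%nat with N by lia. apply root_unity_sum_N. lia.
  - destruct (Nat.lt_ge_cases m k).
    + apply root_unity_sum_0. lia.
    + rewrite <- (root_unity_sum_0 N (m - k)) by lia. apply sum_lt_ext. intros j.
      replace (m + N - k)%nat with (N + (m - k))%nat by lia.
      rewrite Cpow_add_r, omega_pow_N by lia. f_equal. Cring.
Qed.

(** * Cauchy's estimate *)

Lemma root_unity_filter_series (c : coeffs) r N k : 0 <= r -> abs_summable c r -> (k <= N)%nat ->
  is_series (fun m => c m * RtoC r ^ m * sum_lt (fun j => (omega N ^ (m + N - k)) ^ j) N)%C
    (sum_lt (fun j => (omega N ^ (N - k)) ^ j * psum c (RtoC r * omega N ^ j)) N)%C.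
Proof.
  intros Hr Hac Hk.
  eapply is_series_ext;
    [|apply (sum_lt_is_series (fun j m => (omega N ^ (N - k)) ^ j * (c m * (RtoC r * omega N ^ j) ^ m))%C)].
  - intros m. cbv beta. rewrite <- sum_lt_Cmult_l. apply sum_lt_ext. intros j.
    replace (m + N - k)%nat with (m + (N - k))%nat by lia.
    rewrite Cpow_mult_l, Cpow_add_r, Cpow_mult_l, <- !Cpow_mult_r, (Nat.mul_comm m j). Cring.
  - intros j. apply is_series_Cmult_l, (psum_sums c r).
    + exact Hac.
    + rewrite Cmod_mult, Cmod_omega_pow, Cmod_RtoC by lra. lra.
Qed.

(* only the coefficients c_m with m = k or m >= k + N survive the filter *)
Lemma root_unity_filter_error (c : coeffs) r N k : 0 <= r -> abs_summable c r -> (k < N)%nat ->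
  Cmod (sum_lt (fun j => (omega N ^ (N - k)) ^ j * psum c (RtoC r * omega N ^ j)) N
        - c k * RtoC r ^ k * RtoC (INR N))%C
  <= INR N * Series (fun m => Cmod (c (k + N + m)%nat) * r ^ (k + N + m)).
Proof.
  intros Hr Hac Hk.
  set (D := (c k * RtoC r ^ k * RtoC (INR N))%C).
  set (tail := fun m => if Nat.leb (k + N) m then Cmod (c m) * r ^ m else 0).
  assert (Htail : ex_series tail).
  { apply (ex_series_Rle _ _) with (2 := Hac). intros m. unfold tail.
    assert (0 <= Cmod (c m) * r ^ m) by (apply Rmult_le_pos; [apply Cmod_ge_0|apply pow_le; lra]).
    destruct (Nat.leb (k + N) m); lra. }
  replace (Series (fun m => Cmod (c (k + N + m)%nat) * r ^ (k + N + m))) with (Series tail).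
  2:{ rewrite (Series_incr_n_aux _ (k + N)).
      - apply Series_ext. intros m. unfold tail.
        destruct (Nat.leb_spec (k + N) (k + N + m)); [reflexivity|lia].
      - intros m Hm. unfold tail. destruct (Nat.leb_spec (k + N) m); [lia|reflexivity]. }
  rewrite <- Series_scal_l.
  apply (is_series_Cmod_le _ _ _ (is_series_minus _ _ _ _
           (root_unity_filter_series c r N k Hr Hac ltac:(lia)) (is_series_C_single k D)));
    [|apply ex_series_Rmult_l, Htail].
  intros m. change (Cmod (c m * RtoC r ^ m * sum_lt (fun j => (omega N ^ (m + N - k)) ^ j) N
                         - (if Nat.eqb m k then D else RtoC 0))%C <= INR N * tail m).
  unfold tail. destruct (Nat.leb_spec (k + N) m).
  - assert (Nat.eqb m k = false) as -> by (apply Nat.eqb_neq; lia).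
    replace (_ - RtoC 0)%C with (c m * RtoC r ^ m * sum_lt (fun j => (omega N ^ (m + N - k)) ^ j) N)%C
      by Cring.
    rewrite !Cmod_mult, Cmod_pow, Cmod_RtoC by lra.
    assert (Hsig : Cmod (sum_lt (fun j => (omega N ^ (m + N - k)) ^ j) N)%C <= INR N * 1).
    { apply sum_lt_Cmod_le. intros j. rewrite Cmod_pow, Cmod_omega_pow, pow1. lra. }
    assert (0 <= Cmod (c m) * r ^ m) by (apply Rmult_le_pos; [apply Cmod_ge_0|apply pow_le; lra]).
    nra.
  - rewrite root_unity_filter by lia. unfold D.
    destruct (Nat.eqb m k) eqn:E; [apply Nat.eqb_eq in E; subst m|].
    all: replace (_ - _)%C with (RtoC 0) by Cring; rewrite Cmod_0, Rmult_0_r; lra.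
Qed.

(* the discrete Cauchy formula at the N-th roots of unity, for N so large that the tail beyond k + N is small *)
Lemma cauchy_estimate (c : coeffs) r eps : 0 < r -> abs_summable c r ->
  (forall z, Cmod z = r -> forall u, sums_to c z u -> Cmod u <= eps) ->
  forall k, Cmod (c k) * r ^ k <= eps.
Proof.
  intros Hr Hac Hb k. apply le_epsilon. intros e He.
  destruct (Series_tail_small _ Hac e He) as [N0 HN0].
  set (N := (N0 + k + 1)%nat).
  assert (HNpos : 0 < INR N) by (apply lt_0_INR; unfold N; lia).
  set (X := sum_lt (fun j => (omega N ^ (N - k)) ^ j * psum c (RtoC r * omega N ^ j))%C N).
  assert (HX : Cmod X <= INR N * eps).
  { apply sum_lt_Cmod_le. intros j. rewrite Cmod_mult, Cmod_pow, Cmod_omega_pow, pow1, Rmult_1_l.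
    assert (Hz : Cmod (RtoC r * omega N ^ j)%C = r) by (rewrite Cmod_mult, Cmod_omega_pow, Cmod_RtoC; lra).
    apply (Hb _ Hz), (psum_sums c r); [exact Hac|lra]. }
  assert (Herr := root_unity_filter_error c r N k ltac:(lra) Hac ltac:(unfold N; lia)). fold X in Herr.
  assert (Htail := HN0 (k + N)%nat ltac:(unfold N; lia)).
  assert (HD := Cmod_triangle_rev (c k * RtoC r ^ k * RtoC (INR N))%C X).
  rewrite Cmod_sub_sym, !Cmod_mult, Cmod_pow, !Cmod_RtoC in HD by (try apply pos_INR; lra).
  apply (Rmult_le_reg_r (INR N)); [lra|].
  assert (INR N * Series (fun m => Cmod (c (k + N + m)%nat) * r ^ (k + N + m)) <= INR N * e)
    by (apply Rmult_le_compat_l; lra).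
  lra.
Qed.

(** * Expansion around a point *)

(* [binom_coef v k j] is the coefficient of [u ^ j] in [(v + u) ^ k], i.e. binomial(k, j) v^(k-j) *)
Fixpoint binom_coef (v : C) (k j : nat) : C :=
  match k, j with
  | O, O => RtoC 1
  | O, S _ => RtoC 0
  | S k', O => (v * binom_coef v k' O)%C
  | S k', S j' => (v * binom_coef v k' (S j') + binom_coef v k' j')%C
  end.

Definition binom_rem (v u : C) (k J : nat) : C :=
  ((v + u) ^ k - sum_lt (fun j => binom_coef v k j * u ^ j) J)%C.

Lemma binom_coef_0 v k : binom_coef v k 0 = (v ^ k)%C.
Proof. induction k; [reflexivity|]. simpl. rewrite IHk. reflexivity. Qed.

Lemma binom_rem_succ v u k J :
  binom_rem v u (S k) (S J) = (v * binom_rem v u k (S J) + u * binom_rem v u k J)%C.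
Proof.
  unfold binom_rem. rewrite !sum_lt_succ_l.
  rewrite (sum_lt_ext (fun j => binom_coef v (S k) (S j) * u ^ S j)%C
     (fun j => v * (binom_coef v k (S j) * u ^ S j) + u * (binom_coef v k j * u ^ j))%C)
    by (intros j; simpl; Cring).
  rewrite sum_lt_plus, !sum_lt_Cmult_l. simpl binom_coef. simpl Cpow. Cring.
Qed.

Lemma binom_rem_0_succ v u J : binom_rem v u 0 (S J) = RtoC 0.
Proof.
  unfold binom_rem. rewrite sum_lt_succ_l.
  rewrite (sum_lt_ext _ (fun _ => RtoC 0)) by (intros; simpl; Cring).
  rewrite sum_lt_zero. simpl. Cring.
Qed.

Lemma binom_rem_0_r v u k : binom_rem v u k 0 = ((v + u) ^ k)%C.
Proof. unfold binom_rem. simpl. Cring. Qed.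

Lemma binom_rem_bound v u s k J : 0 < s -> Cmod u <= s ->
  Cmod (binom_rem v u k J) <= (Cmod u / s) ^ J * (Cmod v + s) ^ k.
Proof.
  intros Hs Hu.
  assert (Hq : 0 <= Cmod u / s) by (apply Rdiv_le_0_compat; [apply Cmod_ge_0|lra]).
  assert (Hv := Cmod_ge_0 v).
  revert J. induction k; intros [|J].
  - rewrite binom_rem_0_r. simpl. rewrite Cmod_1. lra.
  - rewrite binom_rem_0_succ, Cmod_0. apply Rmult_le_pos; apply pow_le; lra.
  - rewrite binom_rem_0_r, Cmod_pow, pow_O, Rmult_1_l.
    apply pow_incr. split; [apply Cmod_ge_0|]. eapply Rle_trans; [apply Cmod_triangle|lra].
  - rewrite binom_rem_succ. eapply Rle_trans; [apply Cmod_triangle|]. rewrite !Cmod_mult.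
    assert (H1 := IHk (S J)). assert (H2 := IHk J).
    assert (0 <= Cmod u) by apply Cmod_ge_0.
    apply Rle_trans with (Cmod v * ((Cmod u / s) ^ S J * (Cmod v + s) ^ k)
                          + Cmod u * ((Cmod u / s) ^ J * (Cmod v + s) ^ k)).
    + apply Rplus_le_compat; apply Rmult_le_compat_l; auto.
    + right. replace (Cmod u) with (s * (Cmod u / s)) at 2 by (field; lra). simpl. ring.
Qed.

Lemma binom_coef_bound v s k j : 0 < s -> Cmod (binom_coef v k j) * s ^ j <= 2 * (Cmod v + s) ^ k.
Proof.
  intros Hs.
  assert (E : (binom_coef v k j * RtoC s ^ j)%C = (binom_rem v s k j - binom_rem v s k (S j))%C)
    by (unfold binom_rem; simpl sum_lt; Cring).
  assert (Hc : Cmod (RtoC s) = s) by (apply Cmod_RtoC; lra).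
  assert (H1 := binom_rem_bound v s s k j Hs ltac:(lra)).
  assert (H2 := binom_rem_bound v s s k (S j) Hs ltac:(lra)).
  rewrite Hc in H1, H2. replace (s / s) with 1 in H1, H2 by (field; lra). rewrite pow1 in H1, H2.
  replace (Cmod (binom_coef v k j) * s ^ j) with (Cmod (binom_coef v k j * RtoC s ^ j)%C)
    by (rewrite Cmod_Cmult_pow, Hc; reflexivity).
  rewrite E.
  unfold Cminus. eapply Rle_trans; [apply Cmod_triangle|]. rewrite Cmod_opp. lra.
Qed.

Definition taylor_coef (c : coeffs) (v : C) (j : nat) : C :=
  CSeries (fun k => c k * binom_coef v k j)%C.

Lemma taylor_coef_sums c R0 v s j : abs_summable c R0 -> 0 < s -> Cmod v + s <= R0 ->
  is_series (fun k => c k * binom_coef v k j)%C (taylor_coef c v j).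
Proof.
  intros Hac Hs Hv. apply CSeries_correct.
  assert (Hsj : 0 < s ^ j) by (apply pow_lt; lra).
  apply (ex_series_Cmod_le _ (fun k => (2 / s ^ j) * (Cmod (c k) * R0 ^ k))).
  - intros k. rewrite Cmod_mult.
    assert (Hb := binom_coef_bound v s k j Hs).
    assert (HA : (Cmod v + s) ^ k <= R0 ^ k)
      by (apply pow_incr; split; [generalize (Cmod_ge_0 v); lra|lra]).
    assert (Ht : Cmod (binom_coef v k j) <= 2 / s ^ j * R0 ^ k).
    { apply (Rmult_le_reg_r (s ^ j)); [auto|].
      replace (2 / s ^ j * R0 ^ k * s ^ j) with (2 * R0 ^ k) by (field; lra). lra. }
    assert (0 <= Cmod (c k)) by apply Cmod_ge_0.
    apply Rle_trans with (Cmod (c k) * (2 / s ^ j * R0 ^ k)); [apply Rmult_le_compat_l; auto|].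
    right; ring.
  - apply ex_series_Rmult_l. exact Hac.
Qed.

Lemma taylor_coef_0 c R0 v s : abs_summable c R0 -> 0 < s -> Cmod v + s <= R0 ->
  taylor_coef c v 0 = psum c v.
Proof.
  intros Hac Hs Hv. apply (is_series_C_unique (fun k => c k * binom_coef v k 0)%C).
  - apply (taylor_coef_sums c R0 v s); auto.
  - eapply is_series_ext; [|apply (psum_sums c R0 v Hac ltac:(lra))].
    intros k. simpl. rewrite binom_coef_0. reflexivity.
Qed.

Lemma psum_taylor c R0 v s u J : abs_summable c R0 -> 0 < s -> Cmod v + s <= R0 -> Cmod u <= s ->
  Cmod (psum c (v + u) - sum_lt (fun j => taylor_coef c v j * u ^ j) J)%C
  <= (Cmod u / s) ^ J * abs_sum c R0.
Proof.
  intros Hac Hs Hv Hu.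
  assert (Hvu : Cmod (v + u)%C <= R0) by (eapply Rle_trans; [apply Cmod_triangle|lra]).
  assert (Hpartial : is_series (fun k => c k * sum_lt (fun j => binom_coef v k j * u ^ j) J)%C
                       (sum_lt (fun j => taylor_coef c v j * u ^ j) J)%C).
  { eapply is_series_ext; [|apply (sum_lt_is_series (fun j k => c k * binom_coef v k j * u ^ j)%C)].
    - intros k. cbv beta. rewrite <- sum_lt_Cmult_l. apply sum_lt_ext. intros j. Cring.
    - intros j. apply is_series_Cmult_r, (taylor_coef_sums c R0 v s); auto. }
  assert (Hq : 0 <= (Cmod u / s) ^ J)
    by (apply pow_le, Rdiv_le_0_compat; [apply Cmod_ge_0|lra]).
  unfold abs_sum. rewrite <- Series_scal_l.
  apply (is_series_Cmod_le _ _ _ (is_series_minus _ _ _ _ (psum_sums c R0 (v + u) Hac Hvu) Hpartial));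
    [|apply ex_series_Rmult_l; exact Hac].
  intros k. change (Cmod (c k * (v + u) ^ k - c k * sum_lt (fun j => binom_coef v k j * u ^ j) J)%C
                    <= (Cmod u / s) ^ J * (Cmod (c k) * R0 ^ k)).
  replace (c k * (v + u) ^ k - c k * sum_lt (fun j => binom_coef v k j * u ^ j) J)%C
    with (c k * binom_rem v u k J)%C by (unfold binom_rem; Cring).
  rewrite Cmod_mult.
  assert (Hb := binom_rem_bound v u s k J Hs Hu).
  assert (HA : (Cmod v + s) ^ k <= R0 ^ k)
    by (apply pow_incr; split; [generalize (Cmod_ge_0 v); lra|lra]).
  assert (0 <= Cmod (c k)) by apply Cmod_ge_0.
  apply Rle_trans with (Cmod (c k) * ((Cmod u / s) ^ J * (Cmod v + s) ^ k));
    [apply Rmult_le_compat_l; auto|].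
  replace ((Cmod u / s) ^ J * (Cmod (c k) * R0 ^ k)) with (Cmod (c k) * ((Cmod u / s) ^ J * R0 ^ k))
    by ring.
  apply Rmult_le_compat_l; auto. apply Rmult_le_compat_l; auto.
Qed.

Lemma psum_lipschitz c R0 v s u : abs_summable c R0 -> 0 < s -> Cmod v + s <= R0 -> Cmod u <= s ->
  Cmod (psum c (v + u) - psum c v)%C <= Cmod u / s * abs_sum c R0.
Proof.
  intros Hac Hs Hv Hu. assert (H := psum_taylor c R0 v s u 1 Hac Hs Hv Hu).
  simpl sum_lt in H. rewrite (taylor_coef_0 c R0 v s), pow_1 in H by auto.
  replace (RtoC 0 + psum c v * 1)%C with (psum c v) in H by Cring. exact H.
Qed.

Lemma psum_continuous c R0 rho p : 0 < rho < R0 -> abs_summable c R0 -> Cmod p <= rho ->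
  forall e, 0 < e -> exists d, 0 < d /\
    forall q, Cmod (q - p)%C < d -> Cmod (psum c q - psum c p)%C < e.
Proof.
  intros Hr Hac Hp e He.
  set (s := R0 - rho). set (A := abs_sum c R0).
  assert (Hs : 0 < s) by (unfold s; lra).
  assert (HA : 0 <= A) by (apply abs_sum_nonneg; [lra|auto]).
  exists (Rmin s (e * s / (A + 1))). split.
  { apply Rmin_glb_lt; [lra|]. apply Rdiv_lt_0_compat; nra. }
  intros q Hq.
  assert (H1 : Cmod (q - p)%C < s) by (eapply Rlt_le_trans; [exact Hq|apply Rmin_l]).
  assert (H2 : Cmod (q - p)%C < e * s / (A + 1)) by (eapply Rlt_le_trans; [exact Hq|apply Rmin_r]).
  assert (L := psum_lipschitz c R0 p s (q - p)%C Hac Hs ltac:(unfold s; lra) ltac:(lra)).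
  replace (p + (q - p))%C with q in L by Cring.
  eapply Rle_lt_trans; [exact L|].
  apply Rle_lt_trans with (e / (A + 1) * A).
  - apply Rmult_le_compat_r; auto. apply (Rmult_le_reg_r s); auto.
    replace (Cmod (q - p)%C / s * s) with (Cmod (q - p)%C) by (field; lra).
    replace (e / (A + 1) * s) with (e * s / (A + 1)) by (field; lra). lra.
  - apply (Rmult_lt_reg_r (A + 1)); [lra|].
    replace (e / (A + 1) * A * (A + 1)) with (e * A) by (field; lra). nra.
Qed.

Lemma psum_zero_closed c R0 rho p : 0 < rho < R0 -> abs_summable c R0 -> Cmod p <= rho ->
  (forall e, 0 < e -> exists q, psum c q = RtoC 0 /\ Cmod (q - p)%C < e) -> psum c p = RtoC 0.
Proof.
  intros Hr Hac Hp H. apply Cmod_le_eps_eq. intros e He.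
  destruct (psum_continuous c R0 rho p Hr Hac Hp e He) as [d [Hd Hq]].
  destruct (H d Hd) as [q [Hq0 Hqd]]. specialize (Hq q Hqd).
  rewrite Hq0 in Hq. rewrite Cmod_sub_sym. lra.
Qed.

Lemma exists_min_modulus_zero c R0 rho z0 : 0 < rho < R0 -> abs_summable c R0 ->
  Cmod z0 < rho -> psum c z0 = RtoC 0 ->
  exists zs, Cmod zs <= Cmod z0 /\ psum c zs = RtoC 0 /\
    forall t, psum c t = RtoC 0 -> Cmod t <= Cmod z0 -> Cmod zs <= Cmod t.
Proof.
  intros Hr Hac Hz0 Hv0.
  set (Z := fun z => Cmod z <= Cmod z0 /\ psum c z = RtoC 0).
  destruct (C_closed_bounded_min Z Cmod (Cmod z0)) as [zs [[H1 H2] H3]].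
  - exists z0. split; [lra|auto].
  - intros p [Hp _]. exact Hp.
  - intros p H.
    assert (Hp : Cmod p <= Cmod z0).
    { apply le_epsilon. intros e He. destruct (H e He) as [q [[Hq1 _] Hq2]].
      generalize (Cmod_triangle_rev p q). rewrite Cmod_sub_sym. lra. }
    split; [exact Hp|]. apply (psum_zero_closed c R0 rho p Hr Hac ltac:(lra)).
    intros e He. destruct (H e He) as [q [[_ Hq] Hq2]]. exists q. auto.
  - intros p _ e He. exists e. split; [exact He|]. intros q _ Hq.
    eapply Rle_lt_trans; [apply (Rabs_Cmod_sub q p)|exact Hq].
  - exists zs. repeat split; auto. intros t Ht1 Ht2. apply H3. split; auto.
Qed.

Lemma Rle_geom_0 (q A x : R) : 0 <= q < 1 -> (forall J, x <= q ^ J * A) -> x <= 0.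
Proof.
  intros Hq H. destruct (Rle_or_lt x 0) as [Hx|Hx]; [exact Hx|exfalso].
  destruct (Rle_or_lt A 0) as [HA|HA]; [specialize (H O); simpl in H; lra|].
  destruct (pow_lt_1_zero q ltac:(rewrite Rabs_pos_eq; lra) (x / A)
              ltac:(apply Rdiv_lt_0_compat; lra)) as [N HN].
  specialize (HN N (le_n N)). specialize (H N).
  rewrite Rabs_pos_eq in HN by (apply pow_le; lra).
  apply (Rmult_lt_compat_r A) in HN; [|exact HA].
  replace (x / A * A) with x in HN by (field; lra). lra.
Qed.

Lemma psum_locally_const c R0 v s : abs_summable c R0 -> 0 < s -> Cmod v + s <= R0 ->
  (forall j, (1 <= j)%nat -> taylor_coef c v j = RtoC 0) ->
  forall u, Cmod u <= s / 2 -> psum c (v + u)%C = psum c v.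
Proof.
  intros Hac Hs Hv H u Hu.
  assert (Hq : 0 <= Cmod u / s < 1).
  { split; [apply Rdiv_le_0_compat; [apply Cmod_ge_0|lra]|apply (Rdiv_lt_1 _ s); lra]. }
  apply Cminus_eq_0, Cmod_eq_0, Rle_antisym; [|apply Cmod_ge_0].
  apply (Rle_geom_0 (Cmod u / s) (Cmod u / s * abs_sum c R0)); [exact Hq|]. intros J.
  assert (T := psum_taylor c R0 v s u (S J) Hac Hs Hv ltac:(lra)).
  rewrite sum_lt_succ_l, (sum_lt_ext _ (fun _ => RtoC 0)) in T
    by (intros j; rewrite H by lia; Cring).
  rewrite sum_lt_zero, (taylor_coef_0 c R0 v s) in T by auto.
  replace (psum c v * u ^ 0 + 0)%C with (psum c v) in T by (simpl; Cring).
  simpl pow in T. lra.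
Qed.

(* otherwise the function would be constant near zs, giving zeros of smaller modulus *)
Lemma taylor_coef_min_zero c R0 zs s : abs_summable c R0 -> 0 < s -> Cmod zs + s <= R0 ->
  zs <> RtoC 0 -> psum c zs = RtoC 0 ->
  (forall t, psum c t = RtoC 0 -> Cmod t <= Cmod zs -> Cmod zs <= Cmod t) ->
  exists j, (1 <= j)%nat /\ taylor_coef c zs j <> RtoC 0.
Proof.
  intros Hac Hs Hzs Hnz Hv Hmin. apply NNPP. intros Hno.
  assert (Hall : forall j, (1 <= j)%nat -> taylor_coef c zs j = RtoC 0)
    by (intros j Hj; apply NNPP; intros Hj'; apply Hno; exists j; auto).
  assert (Hpos : 0 < Cmod zs) by (apply Cmod_gt_0; auto).
  set (t := Rmin (1/2) (s / (2 * Cmod zs))).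
  assert (Ht0 : 0 < t) by (apply Rmin_glb_lt; [lra|apply Rdiv_lt_0_compat; lra]).
  assert (Ht1 : t <= 1/2) by apply Rmin_l.
  assert (Ht2 : t * Cmod zs <= s / 2).
  { apply Rle_trans with (s / (2 * Cmod zs) * Cmod zs); [|right; field; lra].
    apply Rmult_le_compat_r; [lra|apply Rmin_r]. }
  set (u := (RtoC (- t) * zs)%C).
  assert (Hu : Cmod u = t * Cmod zs)
    by (unfold u; rewrite Cmod_mult, Cmod_R, Rabs_Ropp, Rabs_pos_eq by lra; reflexivity).
  assert (Hm : Cmod (zs + u)%C = (1 - t) * Cmod zs).
  { replace (zs + u)%C with (RtoC (1 - t) * zs)%C by (unfold u; rewrite RtoC_minus, RtoC_opp; Cring).
    rewrite Cmod_mult, Cmod_R, Rabs_pos_eq by lra. reflexivity. }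
  assert (Hc := psum_locally_const c R0 zs s Hac Hs Hzs Hall u ltac:(lra)).
  assert (H := Hmin (zs + u)%C ltac:(rewrite Hc; auto) ltac:(rewrite Hm; nra)).
  rewrite Hm in H. nra.
Qed.

Lemma first_taylor_coef c v :
  (exists j, (1 <= j)%nat /\ taylor_coef c v j <> RtoC 0) ->
  exists k, (1 <= k)%nat /\ taylor_coef c v k <> RtoC 0 /\
    forall j, (1 <= j < k)%nat -> taylor_coef c v j = RtoC 0.
Proof.
  intros Hex. destruct (exists_least_nat _ Hex) as [k [[Hk1 Hk] Hmin]].
  exists k. repeat split; auto. intros j Hj.
  apply NNPP. intros Hj'. apply (Hmin j); [lia|split; [lia|auto]].
Qed.

Lemma psum_taylor_two_terms c R0 v s u k : abs_summable c R0 -> 0 < s -> Cmod v + s <= R0 ->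
  Cmod u <= s -> (1 <= k)%nat -> (forall j, (1 <= j < k)%nat -> taylor_coef c v j = RtoC 0) ->
  Cmod (psum c (v + u) - (psum c v + taylor_coef c v k * u ^ k))%C
  <= (Cmod u / s) ^ S k * abs_sum c R0.
Proof.
  intros Hac Hs Hv Hu Hk Hzero.
  assert (T := psum_taylor c R0 v s u (S k) Hac Hs Hv Hu).
  rewrite sum_lt_two, (taylor_coef_0 c R0 v s) in T;
    [|auto..|intros j Hj; rewrite Hzero by exact Hj; Cring].
  replace (psum c v * u ^ 0)%C with (psum c v) in T by (simpl; Cring). exact T.
Qed.

Lemma pow_remainder_le (a s' A t : R) k : 0 < s' -> 0 <= A -> 0 <= a -> 0 <= t ->
  t <= a * s' ^ S k / (A + 1) -> (t / s') ^ S k * A <= a * t ^ k.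
Proof.
  intros Hs HA Ha Ht Hle.
  assert (Hsk : 0 < s' ^ S k) by (apply pow_lt; lra).
  rewrite pow_Rdiv by lra.
  replace (t ^ S k / s' ^ S k * A) with (t ^ k * (t * A / s' ^ S k))
    by (simpl; field; split; [apply pow_nonzero|]; lra).
  rewrite (Rmult_comm a). apply Rmult_le_compat_l; [apply pow_le; lra|].
  apply (Rmult_le_reg_r (s' ^ S k)); [lra|].
  replace (t * A / s' ^ S k * s' ^ S k) with (t * A) by (field; lra).
  apply Rle_trans with (a * s' ^ S k / (A + 1) * A); [apply Rmult_le_compat_r; lra|].
  replace (a * s' ^ S k / (A + 1) * A) with (a * s' ^ S k * (A / (A + 1))) by (field; lra).
  assert (A / (A + 1) <= 1) by (apply (Rdiv_le_1 A (A + 1)); lra).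
  assert (0 <= a * s' ^ S k) by nra. nra.
Qed.

(* on small circles the leading term E u^k dominates the Taylor remainder *)
Lemma circle_lower_bound c R0 rho zs k : 0 < rho < R0 -> abs_summable c R0 -> Cmod zs < rho ->
  psum c zs = RtoC 0 -> (1 <= k)%nat -> taylor_coef c zs k <> RtoC 0 ->
  (forall j, (1 <= j < k)%nat -> taylor_coef c zs j = RtoC 0) ->
  exists s beta, 0 < s /\ s <= rho - Cmod zs /\ 0 < beta /\
    forall u, Cmod u = s -> beta <= Cmod (psum c (zs + u)).
Proof.
  intros Hr Hac Hzs Hv Hk HE Hzero.
  set (E := taylor_coef c zs k). set (s' := R0 - rho). set (A := abs_sum c R0).
  assert (Hs' : 0 < s') by (unfold s'; lra).
  assert (HA : 0 <= A) by (apply abs_sum_nonneg; [lra|auto]).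
  assert (HEp : 0 < Cmod E) by (apply Cmod_gt_0; auto).
  assert (Hbound : 0 < Cmod E / 2 * s' ^ S k / (A + 1))
    by (apply Rdiv_lt_0_compat; [apply Rmult_lt_0_compat; [lra|apply pow_lt; lra]|lra]).
  set (s := Rmin (Rmin s' (rho - Cmod zs)) (Cmod E / 2 * s' ^ S k / (A + 1))).
  assert (Hs : 0 < s /\ s <= s' /\ s <= rho - Cmod zs /\ s <= Cmod E / 2 * s' ^ S k / (A + 1))
    by (unfold s, Rmin; repeat destruct Rle_dec; lra).
  assert (Hsk : 0 < s ^ k) by (apply pow_lt; lra).
  exists s, (Cmod E * s ^ k / 2). repeat split; try lra; [nra|].
  intros u Hu.
  assert (T := psum_taylor_two_terms c R0 zs s' u k Hac Hs' ltac:(unfold s'; lra) ltac:(lra) Hk Hzero).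
  rewrite Hv, Hu in T. fold E A in T.
  replace (RtoC 0 + E * u ^ k)%C with (E * u ^ k)%C in T by Cring.
  assert (Hrem := pow_remainder_le (Cmod E / 2) s' A s k Hs' HA ltac:(lra) ltac:(lra) ltac:(lra)).
  assert (Hrt := Cmod_triangle_rev (E * u ^ k)%C (psum c (zs + u))).
  rewrite Cmod_sub_sym, Cmod_mult, Cmod_pow, Hu in Hrt.
  lra.
Qed.

Lemma Cmod_1_plus_le (x : C) : fst x < 0 -> fst x ^ 2 + snd x ^ 2 <= - fst x / 2 ->
  Cmod (1 + x)%C <= 1 + fst x / 2.
Proof.
  intros H1 H2. unfold Cmod. simpl fst; simpl snd.
  assert (Hx : - 1 / 2 <= fst x) by nra.
  rewrite <- (sqrt_Rsqr (1 + fst x / 2)) by lra. apply sqrt_le_1_alt.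
  unfold Rsqr. simpl in *. nra.
Qed.

Lemma Cmod_1_plus_small_rotation (b zeta : C) (lam t : R) k : Cmod zeta = 1 ->
  fst (b * zeta ^ k)%C = - lam -> 0 < lam -> 0 < t <= 1 -> t <= lam / (2 * Cmod b ^ 2 + 1) ->
  (1 <= k)%nat -> Cmod (1 + RtoC (t ^ k) * (b * zeta ^ k))%C <= 1 - lam * t ^ k / 2.
Proof.
  intros Hzeta Hre Hlam Ht Htlam Hk.
  assert (Hb2 : 0 < 2 * Cmod b ^ 2 + 1) by (generalize (pow2_ge_0 (Cmod b)); lra).
  assert (Hsmall : t * (2 * Cmod b ^ 2 + 1) <= lam).
  { replace lam with (lam / (2 * Cmod b ^ 2 + 1) * (2 * Cmod b ^ 2 + 1)) by (field; lra).
    apply Rmult_le_compat_r; lra. }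
  set (x := (RtoC (t ^ k) * (b * zeta ^ k))%C).
  assert (Htk : 0 < t ^ k <= t).
  { split; [apply pow_lt; lra|]. destruct k as [|k]; [lia|]. simpl.
    assert (H := pow_le_1 t k ltac:(lra)). nra. }
  assert (Hfx : fst x = - lam * t ^ k).
  { rewrite <- Hre. unfold x. destruct (b * zeta ^ k)%C. unfold RtoC, Cmult. simpl. ring. }
  assert (Hmx : fst x ^ 2 + snd x ^ 2 = (t ^ k * Cmod b) ^ 2).
  { rewrite <- Cmod2_alt. unfold x. rewrite !Cmod_mult, Cmod_pow, Hzeta, pow1, Cmod_RtoC by lra.
    unfold Re, Im. ring. }
  assert (Hb := Cmod_ge_0 b).
  assert (H := Cmod_1_plus_le x ltac:(rewrite Hfx; nra) ltac:(rewrite Hmx, Hfx; nra)).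
  rewrite Hfx in H. lra.
Qed.

(* step in a direction zeta where (F / e(v)) zeta^k has negative real part *)
Lemma psum_modulus_descent e R0 v s' k : abs_summable e R0 -> 0 < s' -> Cmod v + s' <= R0 ->
  psum e v <> RtoC 0 -> (1 <= k)%nat -> taylor_coef e v k <> RtoC 0 ->
  (forall j, (1 <= j < k)%nat -> taylor_coef e v j = RtoC 0) ->
  forall delta, 0 < delta -> exists u, Cmod u <= delta /\ Cmod (psum e (v + u)) < Cmod (psum e v).
Proof.
  intros Hac Hs' Hv HGv Hk HF Hzero delta Hdelta.
  set (Gv := psum e v). set (F := taylor_coef e v k). set (mu := Cmod Gv). set (A := abs_sum e R0).
  assert (HA : 0 <= A) by (apply abs_sum_nonneg; [generalize (Cmod_ge_0 v); lra|auto]).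
  assert (Hmu : 0 < mu) by (apply Cmod_gt_0; auto).
  set (b := (F / Gv)%C).
  assert (Hb : b <> RtoC 0).
  { intros H. apply HF. fold F. replace F with (b * Gv)%C by (unfold b; field; auto).
    rewrite H. Cring. }
  destruct (exists_unit_Re_neg b k Hb ltac:(lia)) as [zeta [Hzeta Hdir]].
  set (lam := - fst (b * zeta ^ k)%C).
  assert (Hlam : 0 < lam) by (unfold lam; lra).
  assert (Hbnd1 : 0 < lam / (2 * Cmod b ^ 2 + 1))
    by (apply Rdiv_lt_0_compat; [lra|generalize (pow2_ge_0 (Cmod b)); lra]).
  assert (Hbnd2 : 0 < mu * lam / 4 * s' ^ S k / (A + 1))
    by (apply Rdiv_lt_0_compat; [repeat apply Rmult_lt_0_compat; try lra; apply pow_lt; lra|lra]).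
  set (t := Rmin (Rmin delta (Rmin s' 1))
                 (Rmin (lam / (2 * Cmod b ^ 2 + 1)) (mu * lam / 4 * s' ^ S k / (A + 1)))).
  assert (Ht : 0 < t /\ t <= delta /\ t <= s' /\ t <= 1 /\ t <= lam / (2 * Cmod b ^ 2 + 1)
               /\ t <= mu * lam / 4 * s' ^ S k / (A + 1))
    by (unfold t, Rmin; repeat destruct Rle_dec; lra).
  set (u := (RtoC t * zeta)%C).
  assert (Hu : Cmod u = t) by (apply Cmod_RtoC_mult_unit; lra).
  exists u. split; [lra|].
  assert (Hmain : (Gv + F * u ^ k)%C = (Gv * (1 + RtoC (t ^ k) * (b * zeta ^ k)))%C).
  { unfold b, u. rewrite Cpow_mult_l, <- RtoC_pow. field. exact HGv. }
  assert (H1x := Cmod_1_plus_small_rotation b zeta lam t k Hzeta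
                   ltac:(unfold lam; ring) Hlam ltac:(lra) ltac:(tauto) Hk).
  assert (Hrem := pow_remainder_le (mu * lam / 4) s' A t k Hs' HA ltac:(nra) ltac:(lra) ltac:(tauto)).
  assert (T := psum_taylor_two_terms e R0 v s' u k Hac Hs' Hv ltac:(lra) Hk Hzero).
  fold Gv F A in T. rewrite Hmain, Hu in T.
  assert (HGx : Cmod (Gv * (1 + RtoC (t ^ k) * (b * zeta ^ k)))%C <= mu * (1 - lam * t ^ k / 2))
    by (rewrite Cmod_mult; apply Rmult_le_compat_l; lra).
  assert (Htk : 0 < t ^ k) by (apply pow_lt; lra).
  assert (Hpos : 0 < mu * lam * t ^ k) by (repeat apply Rmult_lt_0_compat; lra).
  generalize (Cmod_triangle_rev (psum e (v + u)) (Gv * (1 + RtoC (t ^ k) * (b * zeta ^ k)))%C).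
  fold mu. lra.
Qed.

(** * The minimum modulus principle and Hurwitz's theorem *)

Lemma Cmod_psum_continuous c R0 rho p : 0 < rho < R0 -> abs_summable c R0 -> Cmod p <= rho ->
  forall e, 0 < e -> exists d, 0 < d /\
    forall q, Cmod (q - p)%C < d -> Rabs (Cmod (psum c q) - Cmod (psum c p)) < e.
Proof.
  intros Hr Hac Hp e He. destruct (psum_continuous c R0 rho p Hr Hac Hp e He) as [d [Hd Hq]].
  exists d. split; [exact Hd|]. intros q Hqd.
  eapply Rle_lt_trans; [apply Rabs_Cmod_sub|auto].
Qed.

Lemma closed_disk_closed (zs p : C) s :
  (forall e, 0 < e -> exists q, Cmod (q - zs)%C <= s /\ Cmod (q - p)%C < e) -> Cmod (p - zs)%C <= s.
Proof.
  intros H. apply le_epsilon. intros e He. destruct (H e He) as [q [Hq1 Hq2]].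
  replace (p - zs)%C with ((q - zs) - (q - p))%C by Cring.
  unfold Cminus at 1. eapply Rle_trans; [apply Cmod_triangle|]. rewrite Cmod_opp. lra.
Qed.

Lemma exists_outward_unit (w : C) (t : R) : 0 <= t ->
  exists zeta, Cmod zeta = 1 /\ Cmod (w + RtoC t * zeta)%C = Cmod w + t.
Proof.
  intros Ht. destruct (Ceq_dec w (RtoC 0)) as [->|Hw].
  - exists (RtoC 1). split; [apply Cmod_1|].
    replace (RtoC 0 + RtoC t * RtoC 1)%C with (RtoC t) by Cring.
    rewrite Cmod_0, Cmod_RtoC; lra.
  - assert (Hwp : 0 < Cmod w) by (apply Cmod_gt_0; auto).
    exists (w * RtoC (/ Cmod w))%C. split.
    + rewrite Cmod_mult, Cmod_RtoC by (apply Rlt_le, Rinv_0_lt_compat; auto). field. lra.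
    + replace (w + RtoC t * (w * RtoC (/ Cmod w)))%C with (w * RtoC (1 + t / Cmod w))%C
        by (rewrite RtoC_plus; unfold Rdiv; rewrite RtoC_mult; Cring).
      assert (0 <= t / Cmod w) by (apply Rdiv_le_0_compat; lra).
      rewrite Cmod_mult, Cmod_RtoC by lra. field. lra.
Qed.

Lemma exists_farthest_min_modulus e R0 rho zs s : 0 < rho < R0 -> abs_summable e R0 ->
  0 <= s -> Cmod zs + s <= rho ->
  exists v, Cmod (v - zs)%C <= s /\
    (forall z, Cmod (z - zs)%C <= s -> Cmod (psum e v) <= Cmod (psum e z)) /\
    (forall z, Cmod (z - zs)%C <= s -> Cmod (psum e z) <= Cmod (psum e v) ->
       Cmod (z - zs)%C <= Cmod (v - zs)%C).
Proof.
  intros Hr Hac Hs Hzs.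
  set (B := fun z => Cmod (z - zs)%C <= s).
  assert (HBr : forall z, B z -> Cmod z <= rho).
  { intros z Hz. replace z with ((z - zs) + zs)%C by Cring.
    eapply Rle_trans; [apply Cmod_triangle|]. unfold B in Hz. lra. }
  destruct (C_closed_bounded_min B (fun z => Cmod (psum e z)) rho) as [v0 [Hv0B Hv0min]].
  { exists zs. unfold B. replace (zs - zs)%C with (RtoC 0) by Cring. rewrite Cmod_0. lra. }
  { exact HBr. }
  { intros p H. apply closed_disk_closed. exact H. }
  { intros p Hp e0 He0. destruct (Cmod_psum_continuous e R0 rho p Hr Hac (HBr p Hp) e0 He0)
      as [d [Hd Hq]]. exists d. auto. }
  set (mu := Cmod (psum e v0)).
  destruct (C_closed_bounded_min (fun z => B z /\ Cmod (psum e z) <= mu)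
              (fun z => - Cmod (z - zs)%C) rho) as [v [[HvB HvS] Hvmax]].
  { exists v0. split; [auto|unfold mu; lra]. }
  { intros p [Hp _]. auto. }
  { intros p H. assert (Hp : B p).
    { apply closed_disk_closed. intros e0 He0. destruct (H e0 He0) as [q [[Hq _] Hq2]]. eauto. }
    split; [exact Hp|]. apply le_epsilon. intros e0 He0.
    destruct (Cmod_psum_continuous e R0 rho p Hr Hac (HBr p Hp) e0 He0) as [d [Hd Hq]].
    destruct (H d Hd) as [q [[_ Hq1] Hq2]]. specialize (Hq q Hq2).
    apply Rabs_lt_between' in Hq. lra. }
  { intros p _ e0 He0. exists e0. split; [auto|]. intros q _ Hq.
    replace (- Cmod (q - zs)%C - - Cmod (p - zs)%C) with (- (Cmod (q - zs)%C - Cmod (p - zs)%C))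
      by ring.
    rewrite Rabs_Ropp. eapply Rle_lt_trans; [apply Rabs_Cmod_sub|].
    replace (q - zs - (p - zs))%C with (q - p)%C by Cring. auto. }
  assert (Hmu : Cmod (psum e v) = mu) by (apply Rle_antisym; auto; apply Hv0min; auto).
  exists v. split; [exact HvB|split].
  - intros z Hz. rewrite Hmu. apply Hv0min. exact Hz.
  - intros z Hz Hez. rewrite Hmu in Hez. specialize (Hvmax z (conj Hz Hez)). lra.
Qed.

(* A minimizer of |e| on the disk that is farthest from the centre lies on the boundary: in the
   interior, |e| either decreases in some direction or e is locally constant and the minimizer
   can be pushed outwards. *)
Lemma min_modulus_principle e R0 rho zs s : 0 < rho < R0 -> abs_summable e R0 -> 0 < s ->
  Cmod zs + s <= rho -> (forall z, Cmod (z - zs)%C <= s -> psum e z <> RtoC 0) ->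
  exists z, Cmod (z - zs)%C = s /\ Cmod (psum e z) <= Cmod (psum e zs).
Proof.
  intros Hr Hac Hs Hzs Hnz.
  destruct (exists_farthest_min_modulus e R0 rho zs s Hr Hac ltac:(lra) Hzs)
    as [v [HvB [Hvmin Hvfar]]].
  assert (HzsB : Cmod (zs - zs)%C <= s)
    by (replace (zs - zs)%C with (RtoC 0) by Cring; rewrite Cmod_0; lra).
  destruct (Rle_lt_or_eq_dec _ _ HvB) as [Hlt|Heq]; [exfalso|exists v; auto].
  set (s' := R0 - rho).
  assert (Hv' : Cmod v + s' <= R0).
  { replace v with ((v - zs) + zs)%C by Cring.
    generalize (Cmod_triangle (v - zs) zs). unfold s'. lra. }
  assert (HGv : psum e v <> RtoC 0) by (apply Hnz; auto).
  destruct (classic (exists j, (1 <= j)%nat /\ taylor_coef e v j <> RtoC 0)) as [Hex|Hno].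
  - destruct (first_taylor_coef e v Hex) as [k [Hk [HF Hzero]]].
    destruct (psum_modulus_descent e R0 v s' k Hac ltac:(unfold s'; lra) Hv' HGv Hk HF Hzero
                (s - Cmod (v - zs)%C) ltac:(lra)) as [u [Hu Hdesc]].
    assert (HvuB : Cmod (v + u - zs)%C <= s).
    { replace (v + u - zs)%C with ((v - zs) + u)%C by Cring.
      eapply Rle_trans; [apply Cmod_triangle|lra]. }
    specialize (Hvmin _ HvuB). lra.
  - assert (Hall : forall j, (1 <= j)%nat -> taylor_coef e v j = RtoC 0)
      by (intros j Hj; apply NNPP; intros H; apply Hno; exists j; auto).
    set (t := Rmin (s - Cmod (v - zs)%C) (s' / 2)).
    assert (Ht : 0 < t /\ t <= s - Cmod (v - zs)%C /\ t <= s' / 2)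
      by (unfold t, Rmin, s'; destruct Rle_dec; lra).
    destruct (exists_outward_unit (v - zs)%C t ltac:(lra)) as [zeta [Hzeta Hout]].
    set (u := (RtoC t * zeta)%C).
    assert (Hc := psum_locally_const e R0 v s' Hac ltac:(unfold s'; lra) Hv' Hall u
                    ltac:(unfold u; rewrite Cmod_RtoC_mult_unit by (auto; lra); lra)).
    replace (v - zs + RtoC t * zeta)%C with (v + u - zs)%C in Hout by (unfold u; Cring).
    assert (Hfar := Hvfar (v + u)%C ltac:(lra) ltac:(rewrite Hc; lra)).
    lra.
Qed.

Lemma hurwitz c rho R0 z0 : 0 < rho < R0 -> abs_summable c R0 -> c O <> RtoC 0 ->
  Cmod z0 < rho -> psum c z0 = RtoC 0 ->
  exists delta, 0 < delta /\ forall e, abs_summable e R0 ->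
    (forall z, Cmod z <= rho -> Cmod (psum c z - psum e z)%C < delta) ->
    exists z, Cmod z <= rho /\ psum e z = RtoC 0.
Proof.
  intros Hr Hac Hc0 Hz0 Hv0.
  destruct (exists_min_modulus_zero c R0 rho z0 Hr Hac Hz0 Hv0) as [zs [Hzs1 [Hzs2 Hzs3]]].
  assert (Hzsnz : zs <> RtoC 0) by (intros ->; rewrite psum_0 in Hzs2; auto).
  assert (Hzsr : Cmod zs < rho) by lra.
  destruct (taylor_coef_min_zero c R0 zs (R0 - rho) Hac ltac:(lra) ltac:(lra) Hzsnz Hzs2)
    as [j Hj]; [intros t Ht1 Ht2; apply Hzs3; auto; lra|].
  destruct (first_taylor_coef c zs (ex_intro _ j Hj)) as [k [Hk [HE Hzero]]].
  destruct (circle_lower_bound c R0 rho zs k Hr Hac Hzsr Hzs2 Hk HE Hzero)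
    as [s [beta [Hs [Hs2 [Hb Hcirc]]]]].
  exists (beta / 3). split; [lra|].
  intros e Hace Hclose. apply NNPP. intros Hno.
  assert (Hin : forall z, Cmod (z - zs)%C <= s -> Cmod z <= rho).
  { intros z Hz. replace z with ((z - zs) + zs)%C by Cring.
    eapply Rle_trans; [apply Cmod_triangle|lra]. }
  destruct (min_modulus_principle e R0 rho zs s Hr Hace Hs ltac:(lra)) as [z [Hz1 Hz2]].
  { intros z Hz He. apply Hno. exists z. auto. }
  assert (H1 := Hcirc (z - zs)%C Hz1). replace (zs + (z - zs))%C with z in H1 by Cring.
  assert (H2 := Hclose z (Hin z ltac:(lra))).
  assert (H3 := Hclose zs ltac:(lra)).
  rewrite Hzs2, Cmod_sub_sym in H3. replace (psum e zs - RtoC 0)%C with (psum e zs) in H3 by Cring.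
  assert (H4 := Cmod_triangle_rev (psum c z) (psum e z)). lra.
Qed.

(** * Limits of cm(V)^T lie in the dual *)

Lemma closure_Tset_coef_0 (W : coeffs -> Prop) (g : coeffs) :
  closure_A (Tset W) g -> g O = RtoC 1.
Proof.
  intros [_ Hcl]. symmetry. apply Cmod_le_eps_eq. intros eps Heps.
  destruct (Hcl 0 eps ltac:(lra) Heps) as [h [[[_ Hh0] _] [_ Happ]]].
  rewrite <- Hh0. apply Rlt_le, (Happ (RtoC 0)); [rewrite Cmod_0; lra|apply sums_to_0..].
Qed.

Lemma Tset_cm_hadamard_neq_0 (V : coeffs -> Prop) (f h : coeffs) (x w : C) :
  Tset (cm V) h -> V f -> Cmod x <= 1 -> sums_to (hadamard f h) x w -> w <> RtoC 0.
Proof.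
  intros [_ Hh] Vf Hx Hw. apply (Hh (Pmap x f)); [exists f, x; auto|].
  eapply is_series_ext; [|exact Hw].
  intros k. unfold hadamard, Pmap. rewrite Cpow_1_l. Cring.
Qed.

Lemma coef_sub_bound (g h : coeffs) r eps : in_A g -> in_A h -> 0 < r < 1 ->
  (forall z, Cmod z <= r -> forall u v, sums_to h z u -> sums_to g z v -> Cmod (u - v)%C < eps) ->
  forall k, Cmod (h k - g k)%C * r ^ k <= eps.
Proof.
  intros Hg Hh Hr Happ.
  assert (Hacg := in_A_abs_summable g r Hg ltac:(lra)).
  assert (Hach := in_A_abs_summable h r Hh ltac:(lra)).
  apply (cauchy_estimate (fun k => h k - g k)%C); [lra|apply abs_summable_minus; auto; lra|].
  intros z Hz u Hu.
  assert (Hdiff := is_series_minus _ _ _ _ (psum_sums h r z Hach ltac:(lra))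
                                           (psum_sums g r z Hacg ltac:(lra))).
  replace u with (psum h z - psum g z)%C.
  - apply Rlt_le, (Happ z); [lra|apply (psum_sums h r)|apply (psum_sums g r)]; auto; lra.
  - apply (is_series_C_unique (fun k => (h k - g k) * z ^ k)%C); [|exact Hu].
    eapply is_series_ext; [|exact Hdiff]. intros k.
    change ((h k * z ^ k - g k * z ^ k)%C = ((h k - g k) * z ^ k)%C). Cring.
Qed.

Lemma psum_hadamard_close (f g h : coeffs) r rho R0 eps z : 0 < rho < r -> rho <= R0 ->
  abs_summable (hadamard f g) R0 -> abs_summable (hadamard f h) R0 -> abs_summable f (rho / r) ->
  (forall k, Cmod (h k - g k)%C * r ^ k <= eps) -> Cmod z <= rho ->
  Cmod (psum (hadamard f g) z - psum (hadamard f h) z)%C <= eps * abs_sum f (rho / r).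
Proof.
  intros Hr HR0 Hacg Hach Hacf Hd Hz. unfold abs_sum. rewrite <- Series_scal_l.
  apply (is_series_Cmod_le _ _ _ (is_series_minus _ _ _ _ (psum_sums _ R0 z Hacg ltac:(lra))
                                                        (psum_sums _ R0 z Hach ltac:(lra))));
    [|apply ex_series_Rmult_l, Hacf].
  intros k. change (Cmod (hadamard f g k * z ^ k - hadamard f h k * z ^ k)%C
                    <= eps * (Cmod (f k) * (rho / r) ^ k)).
  replace (hadamard f g k * z ^ k - hadamard f h k * z ^ k)%C with (f k * (- (h k - g k)) * z ^ k)%C
    by (unfold hadamard; Cring).
  rewrite Cmod_Cmult_pow, Cmod_mult, Cmod_opp, pow_Rdiv by lra.
  assert (Hrk : 0 < r ^ k) by (apply pow_lt; lra).
  assert (Hzk : Cmod z ^ k <= rho ^ k) by (apply pow_incr; split; [apply Cmod_ge_0|auto]).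
  assert (Hdk : Cmod (h k - g k)%C <= eps / r ^ k)
    by (apply (Rmult_le_reg_r (r ^ k)); [auto|]; replace (eps / r ^ k * r ^ k) with eps by (field; lra);
        apply Hd).
  assert (0 <= Cmod (f k)) by apply Cmod_ge_0.
  assert (0 <= Cmod (h k - g k)%C) by apply Cmod_ge_0.
  assert (0 <= Cmod z ^ k) by (apply pow_le, Cmod_ge_0).
  apply Rle_trans with (Cmod (f k) * (eps / r ^ k) * rho ^ k); [apply Rmult_le_compat; nra|].
  right. field. lra.
Qed.

Lemma closure_subset_dual (V : coeffs -> Prop) (HV : forall f, V f -> in_A0 f) (g : coeffs) :
  closure_A (Tset (cm V)) g -> dual V g.
Proof.
  intros Hclosure. pose proof Hclosure as [HgA Hcl].
  assert (Hg0 := closure_Tset_coef_0 _ g Hclosure).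
  split; [split; auto|].
  intros f Vf z Hz w Hw Hw0. subst w. destruct (HV f Vf) as [HfA Hf0].
  set (a := Cmod z). assert (Ha : 0 <= a < 1) by (split; [apply Cmod_ge_0|exact Hz]).
  set (rho := a + (1 - a) / 4). set (r := a + (1 - a) / 2). set (R0 := a + 3 * (1 - a) / 4).
  assert (Hacc : abs_summable (hadamard f g) R0) by (apply abs_summable_hadamard; auto; unfold R0; lra).
  assert (Hc0 : hadamard f g O <> RtoC 0).
  { unfold hadamard. rewrite Hf0, Hg0. intros H. injection H. lra. }
  assert (Hvz : psum (hadamard f g) z = RtoC 0)
    by (apply (sums_to_unique (hadamard f g) z); [apply (psum_sums _ R0); auto; unfold R0, a; lra|exact Hw]).
  destruct (hurwitz _ rho R0 z ltac:(unfold rho, R0; lra) Hacc Hc0 ltac:(unfold rho, a; lra) Hvz)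
    as [delta [Hdelta Hhur]].
  assert (Hq : 0 <= rho / r < 1).
  { split; [apply Rdiv_le_0_compat|apply (Rdiv_lt_1 rho r)]; unfold rho, r; lra. }
  set (K := abs_sum f (rho / r)).
  assert (HfK : abs_summable f (rho / r)) by (apply in_A_abs_summable; auto).
  assert (HK : 0 <= K) by (apply abs_sum_nonneg; [lra|auto]).
  set (eps := delta / (2 * (K + 1))).
  assert (Heps : 0 < eps) by (unfold eps; apply Rdiv_lt_0_compat; lra).
  destruct (Hcl r eps ltac:(unfold r; lra) Heps) as [h [HhT [HhA Happ]]].
  assert (Hd := coef_sub_bound g h r eps HgA HhA ltac:(unfold r; lra) Happ).
  assert (Hace : abs_summable (hadamard f h) R0) by (apply abs_summable_hadamard; auto; unfold R0; lra).
  destruct (Hhur _ Hace) as [z1 [Hz1 Hez1]].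
  - intros z' Hz'. eapply Rle_lt_trans.
    + apply (psum_hadamard_close f g h r rho R0 eps z'); auto; unfold rho, r, R0; lra.
    + fold K. unfold eps. apply (Rmult_lt_reg_r (2 * (K + 1))); [lra|].
      replace (delta / (2 * (K + 1)) * K * (2 * (K + 1))) with (delta * K) by (field; lra). nra.
  - apply (Tset_cm_hadamard_neq_0 V f h z1 (psum (hadamard f h) z1) HhT Vf); [unfold rho, a in Hz1; lra| |exact Hez1].
    apply (psum_sums _ R0); auto. unfold R0, rho in *. lra.
Qed.

Theorem theorem1 (V : coeffs -> Prop) (HV : forall f, V f -> in_A0 f) :
  forall g : coeffs, dual V g <-> closure_A (Tset (cm V)) g.
Proof.
  intros g. split.
  - apply dual_subset_closure.
  - apply closure_subset_dual. exact HV.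
Qed.
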